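(* Let $\Sigma$ be an alphabet, $L$ a finite language and $L'$ a regular language over $\Sigma$. Then (a) $\mathrm{rpn}(L) \geq \mathrm{rpn}(\overline{L})$ and $\mathrm{rpn}(L') \geq \mathrm{rpn}(\underline{L'})$; (b) for every weighting $\mu : \Sigma \to \mathbb{R}_{\geq 0}$, $\mathrm{rpn}(L)\geq \mathrm{rpn}(\overline{L}^{\mu})$ and $\mathrm{rpn}(L')\geq \mathrm{rpn}(\underline{L'}_{\mu})$.
   Context: Regular expressions are built from $\epsilon$ and letters by union, concatenation and star (no $\emptyset$); $\mathrm{rpn}(L)$ is the minimum number of syntax-tree nodes of an expression describing $L$. The lower envelope $\underline{L'}$ is the set of words of minimal length in $L'$; for finite $L$ the higher envelope $\overline{L}$ is the set of words of maximal length in $L$. For a weighting $\mu$, the weight of $w=w_1\cdots w_n$ is $\mu(w)=\sum_i\mu(w_i)$; $\underline{L'}_{\mu}$ is the set of words of minimal weight in $L'$ and, for finite $L$, $\overline{L}^{\mu}$ is the set of words of maximal weight in $L$. Languages are assumed nonempty and different from $\{\epsilon\}$. *)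

From mathcomp Require Import all_boot.
From Stdlib Require Import Reals ClassicalEpsilon.
Set Implicit Arguments. Unset Strict Implicit. Unset Printing Implicit Defensive.

Section Regex.
Variable Sigma : finType.

Definition word := seq Sigma.
Definition language := word -> Prop.
Definition lang_eq (L1 L2 : language) : Prop := forall w, L1 w <-> L2 w.

(* Regular expressions without the empty set *)
Inductive regex : Type :=
| REps : regex
| RSym : Sigma -> regex
| RPlus : regex -> regex -> regex
| RCat : regex -> regex -> regex
| RStar : regex -> regex.

Fixpoint rsize (r : regex) : nat :=
  match r with
  | REps => 1
  | RSym _ => 1
  | RPlus r1 r2 => (rsize r1 + rsize r2).+1
  | RCat r1 r2 => (rsize r1 + rsize r2).+1
  | RStar r1 => (rsize r1).+1
  end.

Inductive matches : regex -> language :=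
| MEps : matches REps [::]
| MSym a : matches (RSym a) [:: a]
| MPlusL r s w : matches r w -> matches (RPlus r s) w
| MPlusR r s w : matches s w -> matches (RPlus r s) w
| MCat r s u v : matches r u -> matches s v -> matches (RCat r s) (u ++ v)
| MStar0 r : matches (RStar r) [::]
| MStarS r u v : matches r u -> matches (RStar r) v -> matches (RStar r) (u ++ v).

Definition regular (L : language) : Prop := exists r, lang_eq (matches r) L.
Definition finite_lang (L : language) : Prop := exists s : seq word, forall w, L w <-> w \in s.
Definition nonempty_lang (L : language) : Prop := exists w, L w.
Definition eps_lang : language := fun w => w = [::].

(* rpn L = minimum size of an expression describing L (0 if none exists) *)
Definition rpn_at (L : language) (n : nat) : bool :=
  if excluded_middle_informative (exists r, lang_eq (matches r) L /\ rsize r = n)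
  then true else false.

Definition rpn (L : language) : nat :=
  match excluded_middle_informative (exists n, rpn_at L n) with
  | left H => @ex_minn (rpn_at L) H
  | right _ => 0
  end.

Definition higher_env (L : language) : language :=
  fun w => L w /\ forall v, L v -> size v <= size w.
Definition lower_env (L : language) : language :=
  fun w => L w /\ forall v, L v -> size w <= size v.

Definition weight (mu : Sigma -> R) (w : word) : R :=
  foldr (fun a acc => (mu a + acc)%R) 0%R w.
Definition higher_env_w (mu : Sigma -> R) (L : language) : language :=
  fun w => L w /\ forall v, L v -> (weight mu v <= weight mu w)%R.
Definition lower_env_w (mu : Sigma -> R) (L : language) : language :=
  fun w => L w /\ forall v, L v -> (weight mu w <= weight mu v)%R.

End Regex.

From mathcomp Require Import all_boot zify.
From Stdlib Require Import Reals Lra ClassicalEpsilon.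

Set Implicit Arguments. Unset Strict Implicit. Unset Printing Implicit Defensive.

(* The words of minimal weight matched by an expression r are matched by an
   expression no larger than r, computed bottom-up: keep the lighter branch(es)
   of a union, minimize both factors of a concatenation, and replace a star by
   ε when its body has positive minimal weight, by the star of the minimized
   body otherwise.  This needs the words under each star to have nonnegative
   weight, which holds for nonnegative weightings, and for finite languages
   under any weighting, since there star bodies only match ε.  Maximal weight
   is minimal weight for the negated weighting, and length is the weight of
   the constant weighting 1. *)

Section Regex.
Variable Sigma : finType.
Implicit Types (r : regex Sigma) (u v w : word Sigma) (L : language Sigma).

Lemma matches_eps w : matches (REps Sigma) w <-> w = [::].
Proof. by split=> [m | ->]; [inversion m | constructor]. Qed.

Lemma matches_sym a w : matches (RSym a) w <-> w = [:: a].
Proof. by split=> [m | ->]; [inversion m | constructor]. Qed.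

Lemma matches_plus r1 r2 w :
  matches (RPlus r1 r2) w <-> matches r1 w \/ matches r2 w.
Proof. by split=> [m | [m | m]]; [inversion m; auto | exact: MPlusL | exact: MPlusR]. Qed.

Lemma matches_cat r1 r2 w : matches (RCat r1 r2) w <->
  exists u v, [/\ w = u ++ v, matches r1 u & matches r2 v].
Proof.
split=> [m | [u [v [-> m1 m2]]]]; last exact: MCat.
by inversion m; exists u, v.
Qed.

Lemma matches_star_ind r (P : word Sigma -> Prop) :
  P [::] ->
  (forall u v, matches r u -> matches (RStar r) v -> P v -> P (u ++ v)) ->
  forall w, matches (RStar r) w -> P w.
Proof.
move=> P0 PS w; move Et: (RStar r) => t m.
by elim: m Et => // r' u v mu _ mv IHv [Er]; subst r'; apply: PS mu mv (IHv _).
Qed.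

Lemma matches_inhabited r : exists w, matches r w.
Proof.
elim: r => [|a|r1 [w1 m1] r2 _|r1 [w1 m1] r2 [w2 m2]|r1 _].
- by exists [::]; constructor.
- by exists [:: a]; constructor.
- by exists w1; apply: MPlusL.
- by exists (w1 ++ w2); apply: MCat.
- by exists [::]; constructor.
Qed.

Lemma rpn_at_rsize L r : lang_eq (matches r) L -> rpn_at L (rsize r).
Proof. by move=> E; rewrite /rpn_at; case: excluded_middle_informative => // -[]; exists r. Qed.

Lemma rpn_le L r : lang_eq (matches r) L -> rpn L <= rsize r.
Proof.
move=> E; rewrite /rpn; case: excluded_middle_informative => [ex | []].
- by case: ex_minnP => m _; apply; apply: rpn_at_rsize.
- by exists (rsize r); apply: rpn_at_rsize.
Qed.

Lemma rpn_attained L : regular L -> exists2 r, lang_eq (matches r) L & rsize r = rpn L.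
Proof.
move=> [r0 E0]; rewrite /rpn; case: excluded_middle_informative => [ex | []].
- case: ex_minnP => m; rewrite /rpn_at.
  by case: excluded_middle_informative => // -[r [E Er]] _ _; exists r.
- by exists (rsize r0); apply: rpn_at_rsize.
Qed.

Lemma rpn_le_of_shrink L L2 : regular L ->
  (forall r, lang_eq (matches r) L ->
     exists2 r2, lang_eq (matches r2) L2 & rsize r2 <= rsize r) ->
  regular L2 /\ rpn L2 <= rpn L.
Proof.
move=> /rpn_attained [r E <-] /(_ r E) [r2 E2 le2].
by split; [exists r2 | exact: leq_trans (rpn_le E2) le2].
Qed.

Section MinWeight.
Variable mu : Sigma -> R.

Lemma weight_cat u v : weight mu (u ++ v) = (weight mu u + weight mu v)%R.
Proof. by elim: u => [|a u IH] /=; rewrite ?IH; ring. Qed.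

(* Without this, a star could reach arbitrarily small weights. *)
Fixpoint star_nonneg r : Prop :=
  match r with
  | RPlus r1 r2 | RCat r1 r2 => star_nonneg r1 /\ star_nonneg r2
  | RStar r1 => star_nonneg r1 /\ forall u, matches r1 u -> (0 <= weight mu u)%R
  | _ => True
  end.

Fixpoint min_weight r : R :=
  match r with
  | REps => 0
  | RSym a => mu a
  | RPlus r1 r2 => Rmin (min_weight r1) (min_weight r2)
  | RCat r1 r2 => min_weight r1 + min_weight r2
  | RStar _ => 0
  end.

Fixpoint min_regex r : regex Sigma :=
  match r with
  | RPlus r1 r2 =>
      match total_order_T (min_weight r1) (min_weight r2) with
      | inleft (left _) => min_regex r1
      | inleft (right _) => RPlus (min_regex r1) (min_regex r2)
      | inright _ => min_regex r2
      end
  | RCat r1 r2 => RCat (min_regex r1) (min_regex r2)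
  | RStar r1 => if Rlt_dec 0 (min_weight r1) then REps Sigma else RStar (min_regex r1)
  | _ => r
  end.

Lemma rsize_min_regex r : rsize (min_regex r) <= rsize r.
Proof.
elim: r => //= [r1 IH1 r2 IH2 | r1 IH1 r2 IH2 | r1 IH1].
- by case: total_order_T => [[] | ] _ /=; lia.
- lia.
- by case: Rlt_dec => _ /=; lia.
Qed.

Lemma min_weight_attained r : exists2 w, matches r w & weight mu w = min_weight r.
Proof.
elim: r => [|a|r1 [x1 m1 e1] r2 [x2 m2 e2]|r1 [x1 m1 e1] r2 [x2 m2 e2]|r1 _].
- by exists [::]; first constructor.
- by exists [:: a]; [constructor | rewrite /= Rplus_0_r].
- case: (Rle_dec (min_weight r1) (min_weight r2)) => h /=.
  + by exists x1; [apply: MPlusL | rewrite Rmin_left].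
  + by exists x2; [apply: MPlusR | rewrite Rmin_right //; lra].
- by exists (x1 ++ x2); [apply: MCat | rewrite weight_cat e1 e2].
- by exists [::]; first constructor.
Qed.

Lemma star_weight_ge0 r w : (forall u, matches r u -> (0 <= weight mu u)%R) ->
  matches (RStar r) w -> (0 <= weight mu w)%R.
Proof.
move=> pos; move: w; apply: matches_star_ind => /= [|u v m _ IH]; first lra.
by rewrite weight_cat; have := pos u m; lra.
Qed.

Lemma min_weight_le r w : star_nonneg r -> matches r w -> (min_weight r <= weight mu w)%R.
Proof.
elim: r w => [|a|r1 IH1 r2 IH2|r1 IH1 r2 IH2|r1 _] w /=.
- by move=> _ /matches_eps -> /=; lra.
- by move=> _ /matches_sym -> /=; lra.
- move=> [n1 n2] /matches_plus [m | m].
  + by have := IH1 _ n1 m; have := Rmin_l (min_weight r1) (min_weight r2); lra.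
  + by have := IH2 _ n2 m; have := Rmin_r (min_weight r1) (min_weight r2); lra.
- move=> [n1 n2] /matches_cat [u [v [-> m1 m2]]]; rewrite weight_cat.
  by have := IH1 _ n1 m1; have := IH2 _ n2 m2; lra.
- by move=> [_ pos]; apply: star_weight_ge0.
Qed.

Lemma matches_min_regex r w : star_nonneg r ->
  matches (min_regex r) w <-> matches r w /\ weight mu w = min_weight r.
Proof.
elim: r w => [|a|r1 IH1 r2 IH2|r1 IH1 r2 IH2|r1 IH1] w /=.
- by move=> _; rewrite matches_eps; split=> [-> | []].
- by move=> _; rewrite matches_sym; split=> [-> | []] //=; rewrite Rplus_0_r.
- move=> [n1 n2]; have lo1 := @min_weight_le r1 w n1; have lo2 := @min_weight_le r2 w n2.
  case: total_order_T => [[lt | eq] | gt].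
  + rewrite IH1 // matches_plus Rmin_left; last lra.
    by split=> [[m e] | [[m | /lo2 m] e]]; [split; [left |] | | lra].
  + rewrite matches_plus IH1 // IH2 // matches_plus Rmin_left; last lra.
    by split=> [[[m e] | [m e]] | [[m | m] e]];
      [split; [left | ] | split; [right | ] | left | right]; try split; try lra.
  + rewrite IH2 // matches_plus Rmin_right; last lra.
    by split=> [[m e] | [[/lo1 m | m] e]]; [split; [right |] | lra | ].
- move=> [n1 n2]; rewrite !matches_cat; split.
  + move=> [u [v [-> /(IH1 _ n1) [m1 e1] /(IH2 _ n2) [m2 e2]]]].
    by split; [exists u, v | rewrite weight_cat e1 e2].
  + move=> [[u [v [-> m1 m2]]]]; rewrite weight_cat => e.
    have := min_weight_le n1 m1; have := min_weight_le n2 m2 => lo2 lo1.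
    by exists u, v; split; rewrite // ?IH1 ?IH2 //; split=> //; lra.
- move=> [n1 pos1]; case: Rlt_dec => [gt0 | le0].
  + rewrite matches_eps; split=> [-> | [m]]; first by split; first constructor.
    move: w m; apply: matches_star_ind => // u v m1 mv _; rewrite weight_cat.
    by have := min_weight_le n1 m1; have := star_weight_ge0 pos1 mv; lra.
  + have eq0 : min_weight r1 = 0%R.
      by have [x mx ex] := min_weight_attained r1; have := pos1 x mx; lra.
    split.
    * move: w; apply: matches_star_ind => [|u v /(IH1 _ n1) [m1 e1] _ [mv ev]].
        by split; first constructor.
      by split; [apply: MStarS | rewrite weight_cat e1 ev eq0 Rplus_0_r].
    * move=> [m]; move: w m; apply: matches_star_ind => [_ | u v m1 mv IH].
        exact: MStar0.
      rewrite weight_cat => e; have := pos1 u m1; have := star_weight_ge0 pos1 mv.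
      move=> ge0v ge0u; have eu : weight mu u = 0%R by lra.
      by apply: MStarS; [apply/(IH1 _ n1); rewrite eq0 | apply: IH; lra].
Qed.

Lemma min_regex_lower_env r L : star_nonneg r -> lang_eq (matches r) L ->
  lang_eq (matches (min_regex r)) (lower_env_w mu L).
Proof.
move=> n E w; rewrite matches_min_regex // /lower_env_w -E.
have [x mx ex] := min_weight_attained r.
split=> [[m ->] | [m minw]]; first by split=> // v /E /(min_weight_le n).
by split=> //; have := minw x (proj1 (E x) mx); have := min_weight_le n m; lra.
Qed.

Lemma lower_env_w_rpn L L2 : regular L ->
  (forall r, lang_eq (matches r) L -> star_nonneg r) ->
  lang_eq (lower_env_w mu L) L2 -> regular L2 /\ rpn L2 <= rpn L.
Proof.
move=> regL n E2; apply: rpn_le_of_shrink regL _ => r E.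
exists (min_regex r); last exact: rsize_min_regex.
by move=> w; rewrite (min_regex_lower_env (n r E) E).
Qed.

End MinWeight.

Lemma star_nonneg_ge0 mu r : (forall a, (0 <= mu a)%R) -> star_nonneg mu r.
Proof.
move=> mu0; have weight_ge0 w : (0 <= weight mu w)%R.
  by elim: w => [|a w IH] /=; [lra | have := mu0 a; lra].
by elim: r => //= r1 IH1 *; split.
Qed.

Lemma weight_opp mu w : weight (fun a => - mu a)%R w = (- weight mu w)%R.
Proof. by elim: w => [|a w IH] /=; rewrite ?IH; ring. Qed.

Lemma weight_const c w : weight (fun _ => c) w = (c * INR (size w))%R.
Proof.
elim: w => [|a w IH]; first by rewrite /= Rmult_0_r.
by rewrite [LHS]/= IH (S_INR (size w)); ring.
Qed.

Lemma higher_env_opp mu L :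
  lang_eq (lower_env_w (fun a => - mu a)%R L) (higher_env_w mu L).
Proof. by move=> w; split=> -[Lw ext]; split=> // v /ext; rewrite !weight_opp; lra. Qed.

Lemma lower_env_length L : lang_eq (lower_env_w (fun _ => 1%R) L) (lower_env L).
Proof.
move=> w; split=> -[Lw ext]; split=> // v /ext; rewrite !weight_const.
  by move=> le; apply/leP/INR_le; lra.
by move/leP/le_INR; lra.
Qed.

Lemma higher_env_length L : lang_eq (lower_env_w (fun _ => -1)%R L) (higher_env L).
Proof.
move=> w; split=> -[Lw ext]; split=> // v /ext; rewrite !weight_const.
  by move=> le; apply/leP/INR_le; lra.
by move/leP/le_INR; lra.
Qed.

Definition bounded L := exists N, forall w, L w -> size w <= N.

Lemma bounded_le L1 L2 : bounded L2 ->
  (forall w, L1 w -> exists2 v, L2 v & size w <= size v) -> bounded L1.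
Proof.
move=> [N bnd] le12; exists N => w /le12 [v /bnd vN wv]; exact: leq_trans wv vN.
Qed.

Lemma bounded_star_body r u : bounded (matches (RStar r)) -> matches r u -> u = [::].
Proof.
move=> [N bnd] m; have pow k : matches (RStar r) (flatten (nseq k u)).
  by elim: k => [|k IH]; [exact: MStar0 | exact: MStarS].
have := bnd _ (pow N.+1); rewrite size_flatten /shape map_nseq sumn_nseq.
by case: u {m pow} => //= a u; lia.
Qed.

Lemma bounded_star_nonneg mu r : bounded (matches r) -> star_nonneg mu r.
Proof.
elim: r => //= [r1 IH1 r2 IH2 | r1 IH1 r2 IH2 | r1 IH1] bnd.
- split; [apply: IH1 | apply: IH2]; apply: (bounded_le bnd) => w m.
  + by exists w; first exact: MPlusL.
  + by exists w; first exact: MPlusR.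
- have [x1 m1] := matches_inhabited r1; have [x2 m2] := matches_inhabited r2.
  split; [apply: IH1 | apply: IH2]; apply: (bounded_le bnd) => w m.
  + by exists (w ++ x2); [exact: MCat | rewrite size_cat leq_addr].
  + by exists (x1 ++ w); [exact: MCat | rewrite size_cat leq_addl].
- split=> [|u /(bounded_star_body bnd) -> /=]; last lra.
  apply: IH1; apply: (bounded_le bnd) => w m.
  by exists (w ++ [::]); [apply: MStarS m (MStar0 _) | rewrite cats0].
Qed.

Fixpoint word_regex w : regex Sigma :=
  if w is a :: w' then RCat (RSym a) (word_regex w') else REps Sigma.

Lemma matches_word_regex w v : matches (word_regex w) v <-> v = w.
Proof.
elim: w v => [|a w IH] v /=; first exact: matches_eps.
rewrite matches_cat; split=> [[u [v' [-> /matches_sym -> /IH ->]]] // | ->].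
by exists [:: a], w; split; [| exact/matches_sym | exact/IH].
Qed.

Definition words_regex x (s : seq (word Sigma)) : regex Sigma :=
  foldr (fun w r => RPlus (word_regex w) r) (word_regex x) s.

Lemma matches_words_regex x s v : matches (words_regex x s) v <-> v = x \/ v \in s.
Proof.
elim: s => [|w s IH] /=; first by rewrite matches_word_regex; split=> [| []]; auto.
rewrite matches_plus matches_word_regex IH in_cons.
split=> [[-> | [-> | vs]] | [-> | /orP [/eqP -> | vs]]]; rewrite ?eqxx ?vs ?orbT; auto.
Qed.

Lemma finite_regular L : finite_lang L -> nonempty_lang L -> regular L.
Proof.
move=> [s Ls] [x Lx]; exists (words_regex x s) => v.
by rewrite matches_words_regex Ls; split=> [[-> | //] | ]; [apply/Ls | right].
Qed.

Lemma finite_bounded L : finite_lang L -> bounded L.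
Proof.
move=> [s Ls]; exists (\max_(v <- s) size v) => v /Ls vs.
exact: (leq_bigmax_seq _ vs).
Qed.

End Regex.

Theorem lemma8p1 (Sigma : finType) (L L' : language Sigma) :
  finite_lang L -> nonempty_lang L -> ~ lang_eq L (@eps_lang Sigma) ->
  regular L' -> nonempty_lang L' -> ~ lang_eq L' (@eps_lang Sigma) ->
  (* (a) *)
  ((regular (higher_env L) /\ rpn L >= rpn (higher_env L)) /\
   (regular (lower_env L') /\ rpn L' >= rpn (lower_env L'))) /\
  (* (b) *)
  (forall mu : Sigma -> R, (forall a, (0 <= mu a)%R) ->
     (regular (higher_env_w mu L) /\ rpn L >= rpn (higher_env_w mu L)) /\
     (regular (lower_env_w mu L') /\ rpn L' >= rpn (lower_env_w mu L'))).
Proof.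
move=> finL neL _ regL' _ _.
have regL := finite_regular finL neL.
have starL mu r : lang_eq (matches r) L -> star_nonneg mu r.
  move=> E; apply: bounded_star_nonneg; apply: (bounded_le (finite_bounded finL)).
  by move=> w /E Lw; exists w.
split; [split | move=> mu mu0; split].
- exact: lower_env_w_rpn regL (starL _) (higher_env_length L).
- exact: lower_env_w_rpn regL' (fun r _ => star_nonneg_ge0 r (fun _ => Rle_0_1))
    (lower_env_length L').
- exact: lower_env_w_rpn regL (starL _) (higher_env_opp mu L).
- exact: lower_env_w_rpn regL' (fun r _ => star_nonneg_ge0 r mu0) (fun w => iff_refl _).
Qed.
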